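(* Let $\lambda,\nu$ be partitions with $\nu$ obtained from $\lambda$ by adding one cell. Then \[ \lim_{q\to1}\alpha_{\nu/\lambda}(q,q)=\lim_{q\to1}\overline{\alpha}_{\nu/\lambda}(q,q)=\frac{H_\lambda}{H_\nu}, \] where $H_\kappa=\prod_{c\in\kappa}h_\kappa(c)$ is the product of hook-lengths.
   Context: Partitions are Young diagrams in French convention (cells $(x,y)\in\mathbb{Z}_{>0}^2$, $x\le\lambda_y$), $\lambda'$ the conjugate; for $c=(x,y)\in\lambda$, $a_\lambda(c)=\lambda_y-x$, $\ell_\lambda(c)=\lambda'_x-y$, $h_\lambda(c)=a_\lambda(c)+\ell_\lambda(c)+1$. For $\lambda\subseteq\nu$, $\mathcal{R}_{\nu/\lambda}$ (resp. $\mathcal{C}_{\nu/\lambda}$) is the set of cells of $\lambda$ in a row (resp. column) containing a cell of $\nu/\lambda$. With $[i,j]=1-q^it^j$: $\alpha_{\nu/\lambda}(q,t)=\prod_{c\in\mathcal{R}_{\nu/\lambda}}\frac{[a_\lambda(c),\ell_\lambda(c)+1]}{[a_\nu(c),\ell_\nu(c)+1]}\prod_{c\in\mathcal{C}_{\nu/\lambda}}\frac{[a_\lambda(c)+1,\ell_\lambda(c)]}{[a_\nu(c)+1,\ell_\nu(c)]}$, $\overline{\alpha}_{\nu/\lambda}(q,t)=\prod_{c\in\mathcal{R}_{\nu/\lambda}}\frac{[a_\lambda(c)+1,\ell_\lambda(c)]}{[a_\nu(c)+1,\ell_\nu(c)]}\prod_{c\in\mathcal{C}_{\nu/\lambda}}\frac{[a_\lambda(c),\ell_\lambda(c)+1]}{[a_\nu(c),\ell_\nu(c)+1]}$.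 *)

From HB Require Import structures.
From mathcomp Require Import all_boot all_order all_algebra.
Set Implicit Arguments. Unset Strict Implicit. Unset Printing Implicit Defensive.
Import Order.TTheory GRing.Theory Num.Theory.

(* Partitions as weakly decreasing sequences of positive parts:
   lambda = [:: lambda_1; lambda_2; ...].  Cells (x,y) in French
   convention, x = column >= 1, y = row >= 1, with x <= lambda_y. *)

Definition is_partition (l : seq nat) : bool :=
  sorted geq l && all (fun r => 0 < r)%N l.

(* lambda_y (1-indexed), 0 beyond the last row *)
Definition prow (l : seq nat) (y : nat) : nat := nth 0%N l y.-1.

Definition pcol (l : seq nat) (x : nat) : nat := count (fun r => x <= r)%N l.

Definition cells (l : seq nat) : seq (nat * nat) :=
  [seq (x, y) | y <- iota 1 (size l), x <- iota 1 (prow l y)].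

Definition arm (l : seq nat) (c : nat * nat) : nat := (prow l c.2 - c.1)%N.
Definition leg (l : seq nat) (c : nat * nat) : nat := (pcol l c.1 - c.2)%N.
Definition hook (l : seq nat) (c : nat * nat) : nat := (arm l c + leg l c + 1)%N.

Definition hook_prod (l : seq nat) : nat := (\prod_(c <- cells l) hook l c)%N.

Definition skew (n l : seq nat) : seq (nat * nat) :=
  [seq d <- cells n | d \notin cells l].

Definition inR (n l : seq nat) (c : nat * nat) : bool :=
  has (fun d => d.2 == c.2) (skew n l).
Definition inC (n l : seq nat) (c : nat * nat) : bool :=
  has (fun d => d.1 == c.1) (skew n l).

Local Open Scope ring_scope.

Definition brk (R : ringType) (q t : R) (i j : nat) : R := 1 - q ^+ i * t ^+ j.

Definition alpha (R : fieldType) (n l : seq nat) (q t : R) : R :=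
  (\prod_(c <- cells l | inR n l c)
      (brk q t (arm l c) (leg l c).+1 / brk q t (arm n c) (leg n c).+1)) *
  (\prod_(c <- cells l | inC n l c)
      (brk q t (arm l c).+1 (leg l c) / brk q t (arm n c).+1 (leg n c))).

Definition alphabar (R : fieldType) (n l : seq nat) (q t : R) : R :=
  (\prod_(c <- cells l | inR n l c)
      (brk q t (arm l c).+1 (leg l c) / brk q t (arm n c).+1 (leg n c))) *
  (\prod_(c <- cells l | inC n l c)
      (brk q t (arm l c) (leg l c).+1 / brk q t (arm n c) (leg n c).+1)).

(* At t = q every bracket [i,j] = 1 - q^(i+j) depends only on i + j, and in both
   alpha and alphabar the two exponents of each factor add up to hook lengths, so
   alpha(q,q) = alphabar(q,q) is the product, over the cells c of R and of C, of
   (1 - q^h_lambda(c)) / (1 - q^h_nu(c)), which tends to h_lambda(c) / h_nu(c).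
   If nu adds the cell (a,b) to lambda, then R is row b and C is column a of
   lambda; these disjoint sets are exactly the cells whose hook grows by one, all
   other hooks are unchanged and the new cell has hook 1, so the limit is
   H_lambda / H_nu.  The column lengths of nu are computed through the duality
   x <= lambda_y <-> y <= lambda'_x. *)

From Pilot Require Import Defs.
From HB Require Import structures.
From mathcomp Require Import all_boot all_order all_algebra.
From mathcomp Require Import all_classical all_reals all_analysis.
From mathcomp Require Import zify.
Import Order.TTheory GRing.Theory Num.Theory.
Import numFieldNormedType.Exports.
Set Implicit Arguments. Unset Strict Implicit. Unset Printing Implicit Defensive.

Lemma mem_cells s x y : ((x, y) \in cells s) = [&& 0 < y, 0 < x & x <= prow s y].
Proof.
apply/allpairsPdep/and3P => [[y' [x' [+ + [-> ->]]]]|[y0 x0 x_le]].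
  by rewrite !mem_iota => /andP[? ?] /andP[? ?]; split => //; lia.
exists y, x; rewrite !mem_iota; split => //; last by lia.
have : 0 < nth 0 s y.-1 by rewrite /prow in x_le; lia.
by case: (ltnP y.-1 (size s)) => [|y_big]; [lia | rewrite nth_default].
Qed.

Lemma big_cells (R : Type) (idx : R) (op : Monoid.law idx) s M (F : nat * nat -> R) :
  size s <= M ->
  \big[op/idx]_(c <- cells s) F c =
  \big[op/idx]_(y <- iota 1 M) \big[op/idx]_(x <- iota 1 (prow s y)) F (x, y).
Proof.
move=> sM; rewrite big_allpairs_dep -(subnKC sM) iotaD big_cat /=.
rewrite [X in _ = op _ X]big1_seq ?Monoid.mulm1 // => y /andP[_].
by rewrite mem_iota => /andP[y_big _]; rewrite /prow nth_default ?big_nil //; lia.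
Qed.

Lemma cells_subset_leq_nth l n y :
  {subset cells l <= cells n} -> nth 0 l y <= nth 0 n y.
Proof.
move=> sub_ln; case E: (nth 0 l y) => [//|k].
have : (k.+1, y.+1) \in cells l by rewrite mem_cells /prow /= E.
by move/sub_ln; rewrite mem_cells /prow.
Qed.

Lemma sumn_big_nth s M : size s <= M -> sumn s = \sum_(i < M) nth 0 s i.
Proof.
move=> sM; rewrite sumnE (big_nth 0) -(big_mkord xpredT) (big_cat_nat (leq0n _) sM) /=.
rewrite [X in _ = _ + X]big1_seq ?addn0 // => i /andP[_].
by rewrite mem_index_iota => /andP[? _]; rewrite nth_default.
Qed.

Lemma leq_nth_sumnS s t :
  (forall i, nth 0 s i <= nth 0 t i) -> sumn t = (sumn s).+1 ->
  exists i, forall j, nth 0 t j = nth 0 s j + (j == i).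
Proof.
move=> le_st; set M := size s + size t.
rewrite (@sumn_big_nth t M) ?leq_addl // (@sumn_big_nth s M) ?leq_addr // => sum_t.
have /sum_nat_eq1[i [_ di dj]] : \sum_(i < M) (nth 0 t i - nth 0 s i) == 1.
  have : \sum_(i < M) nth 0 t i = \sum_(i < M) nth 0 s i + \sum_(i < M) (nth 0 t i - nth 0 s i).
    by rewrite -big_split; apply: eq_bigr => i _ /=; rewrite subnKC.
  lia.
case: i di dj => i iM /= di dj; exists i => j; have := le_st j.
case: (ltnP j M) => [jM | Mj]; last first.
  by rewrite !nth_default ?(leq_trans _ Mj) ?leq_addl ?leq_addr // gtn_eqF ?(leq_trans iM Mj).
case: (eqVneq j i) => [-> | ne]; first by lia.
have /dj : Ordinal jM != Ordinal iM by [].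
by move=> /(_ isT) /=; lia.
Qed.

Lemma geq_trans : transitive geq.
Proof. by move=> y x z le_yx le_zy; exact: leq_trans le_zy le_yx. Qed.

Lemma leq_prow s y y' : is_partition s -> y <= y' -> prow s y' <= prow s y.
Proof.
case/andP=> s_sorted _ le_yy'; rewrite /prow.
case: (ltnP y'.-1 (size s)) => y'_small; last by rewrite nth_default.
by apply: (sorted_leq_nth geq_trans leqnn) => //; rewrite ?inE; lia.
Qed.

Lemma leq_prow_pcol s x y : is_partition s -> 0 < x -> 0 < y ->
  (x <= prow s y) = (y <= pcol s x).
Proof.
rewrite /prow /pcol => /andP[+ _] x_gt0; elim: s y => [|r s IH] [|y] //= s_sorted _.
  by rewrite nth_nil leqNgt x_gt0.
have s_le_r : all (geq r) s := order_path_min geq_trans s_sorted.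
have {}s_sorted := path_sorted s_sorted.
case: (leqP x r) => x_r.
  by case: y => [|y] /=; rewrite // add1n ltnS -IH.
have nth_le_r i : nth 0 (r :: s) i <= r.
  case: i => [|i] //=; case: (ltnP i (size s)) => [i_s|?]; last by rewrite nth_default.
  exact: allP s_le_r _ (mem_nth 0 i_s).
rewrite (eq_in_count (a2 := pred0)) => [|z /(allP s_le_r) /= z_r]; last first.
  by rewrite leqNgt (leq_ltn_trans z_r x_r).
by rewrite count_pred0 leqNgt (leq_ltn_trans (nth_le_r y) x_r).
Qed.

Lemma eqn_from_leq (p m : nat) : (forall y, 0 < y -> (y <= p) = (y <= m)) -> p = m.
Proof.
move=> le_pm; case: (ltngtP p m) => // [lt_pm|lt_mp].
  by have := le_pm m (leq_ltn_trans (leq0n p) lt_pm); rewrite leqnn leqNgt lt_pm.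
by have := le_pm p (leq_ltn_trans (leq0n m) lt_mp); rewrite leqnn leqNgt lt_mp.
Qed.

Lemma pcol_eq s x m : is_partition s -> 0 < x ->
  (forall y, 0 < y -> (x <= prow s y) = (y <= m)) -> pcol s x = m.
Proof.
move=> s_part x_gt0 prow_m; apply: eqn_from_leq => y y_gt0.
by rewrite -leq_prow_pcol // prow_m.
Qed.

Section one_cell.
Variables (l n : seq nat) (b : nat).
Hypotheses (l_part : is_partition l) (n_part : is_partition n) (b_gt0 : 0 < b)
  (prow_n : forall y, 0 < y -> prow n y = prow l y + (y == b)).
(* the added cell is (a, b) *)
Local Notation a := (prow l b).+1.

Lemma prow_n_b : prow n b = a.
Proof. by rewrite prow_n // eqxx addn1. Qed.

Lemma pcol_n_a : pcol n a = b.
Proof.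
apply: pcol_eq => // y y_gt0; rewrite prow_n //.
case: (ltngtP y b) => [lt_yb|lt_by|->]; last by rewrite addn1 leqnn.
  have := leq_prow n_part (ltnW lt_yb); rewrite prow_n_b prow_n // (ltn_eqF lt_yb).
  by move=> ?; apply/idP/idP; lia.
by have := leq_prow l_part (ltnW lt_by) => ?; apply/idP/idP; lia.
Qed.

Lemma pcol_l_a : pcol l a = b.-1.
Proof.
apply: pcol_eq => // y y_gt0; case: (ltnP y b) => [lt_yb|le_by].
  have := leq_prow n_part (ltnW lt_yb); rewrite prow_n_b prow_n // (ltn_eqF lt_yb).
  by rewrite addn0 => ?; apply/idP/idP; lia.
by have := leq_prow l_part le_by => ?; apply/idP/idP; lia.
Qed.

Lemma pcol_nE x : 0 < x -> pcol n x = pcol l x + (x == a).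
Proof.
move=> x_gt0; case: (eqVneq x a) => [->|ne].
  by rewrite pcol_n_a pcol_l_a addn1 prednK.
rewrite addn0; apply: pcol_eq => // y y_gt0; rewrite -leq_prow_pcol // prow_n //.
by case: eqP => [->|_]; rewrite ?addn0 // addn1 leq_eqVlt (negbTE ne) ltnS.
Qed.

Lemma arm_n c : c \in cells l -> arm n c = arm l c + (c.2 == b).
Proof.
by case: c => x y; rewrite mem_cells /arm /= => /and3P[y_gt0 _ ?]; rewrite prow_n //; lia.
Qed.

Lemma leg_n c : c \in cells l -> leg n c = leg l c + (c.1 == a).
Proof.
case: c => x y; rewrite mem_cells /leg /= => /and3P[y_gt0 x_gt0 x_le].
have : y <= pcol l x by rewrite -leq_prow_pcol.
by rewrite pcol_nE //; lia.
Qed.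

Lemma cells_not_row_col c : c \in cells l -> ~~ ((c.2 == b) && (c.1 == a)).
Proof.
case: c => x y; rewrite mem_cells /= => /and3P[_ _].
by apply: contraTN => /andP[/eqP-> /eqP->]; rewrite ltnn.
Qed.

Lemma hook_n c : c \in cells l -> hook n c = hook l c + (c.2 == b) + (c.1 == a).
Proof. by move=> c_l; rewrite /hook arm_n // leg_n //; lia. Qed.

Lemma hook_n_new : hook n (a, b) = 1.
Proof. by rewrite /hook /arm /leg /= prow_n_b pcol_n_a !subnn. Qed.

Lemma hook_prod_n : hook_prod n = \prod_(c <- cells l) hook n c.
Proof.
rewrite /hook_prod !(@big_cells _ _ _ _ (size l + size n)) ?leq_addl ?leq_addr //.
apply: eq_big_seq => y; rewrite mem_iota => /andP[y_gt0 _].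
rewrite prow_n //; case: eqP => [->|_]; last by rewrite addn0.
by rewrite iotaD big_cat /= big_seq1 add1n hook_n_new muln1.
Qed.

Lemma mem_skew d : (d \in Defs.skew n l) = (d == (a, b)).
Proof.
case: d => x y; rewrite mem_filter !mem_cells xpair_eqE.
case: (posnP y) => [->|y_gt0]; first by rewrite [0 == b]eq_sym (gtn_eqF b_gt0) andbF.
rewrite prow_n //=; case: (eqVneq y b) => [->|_]; rewrite ?addn1 ?addn0 ?andbT ?andbF /=;
  apply/idP/idP; lia.
Qed.

Lemma inR_skew c : inR n l c = (c.2 == b).
Proof.
apply/hasP/eqP => [[d]|c_b]; first by rewrite mem_skew => /eqP -> /eqP.
by exists (a, b); rewrite ?mem_skew //= c_b.
Qed.

Lemma inC_skew c : inC n l c = (c.1 == a).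
Proof.
apply/hasP/eqP => [[d]|c_a]; first by rewrite mem_skew => /eqP -> /eqP.
by exists (a, b); rewrite ?mem_skew //= c_a.
Qed.

Local Open Scope ring_scope.

Lemma hook_ratio_prod (R : numFieldType) :
  \prod_(c <- cells l | inR n l c) ((hook l c)%:R / (hook n c)%:R) *
  \prod_(c <- cells l | inC n l c) ((hook l c)%:R / (hook n c)%:R)
  = (hook_prod l)%:R / (hook_prod n)%:R :> R.
Proof.
rewrite hook_prod_n /hook_prod !natr_prod -prodf_div [RHS](bigID (inR n l)) /=.
congr (_ * _); rewrite big_mkcond [RHS]big_mkcond; apply: eq_big_seq => c c_l /=.
rewrite inR_skew inC_skew hook_n //; have := cells_not_row_col c_l.
by case: (c.2 == b); case: (c.1 == a) => //= _; rewrite !addn0 divff // pnatr_eq0 /hook addn1.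
Qed.

End one_cell.

Local Open Scope classical_set_scope.
Local Open Scope ring_scope.

Definition hook_qratio (R : fieldType) (n l : seq nat) (q : R) (c : nat * nat) : R :=
  (1 - q ^+ hook l c) / (1 - q ^+ hook n c).

Lemma brk_diag (R : nzRingType) (q : R) i j : brk q q i j = 1 - q ^+ (i + j).
Proof. by rewrite /brk exprD. Qed.

Lemma alpha_diag (R : fieldType) n l (q : R) : alpha n l q q =
  \prod_(c <- cells l | inR n l c) hook_qratio n l q c *
  \prod_(c <- cells l | inC n l c) hook_qratio n l q c.
Proof.
by rewrite /alpha; congr (_ * _); apply: eq_bigr => c _;
  rewrite !brk_diag /hook_qratio /hook !addn1 ?addnS ?addSn.
Qed.

Lemma alphabar_diag (R : fieldType) n l (q : R) : alphabar n l q q = alpha n l q q.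
Proof.
by rewrite alpha_diag /alphabar; congr (_ * _); apply: eq_bigr => c _;
  rewrite !brk_diag /hook_qratio /hook !addn1 ?addnS ?addSn.
Qed.

Section limits.
Variable R : realType.

Lemma geom_sum_cvg m : \sum_(i < m) q ^+ i @[q --> (1 : R)^'] --> (m%:R : R).
Proof.
have -> : (fun q : R => \sum_(i < m) q ^+ i) = horner (\sum_(i < m) 'X^i).
  by apply: funext => q; rewrite horner_sum; apply: eq_bigr => i _; rewrite hornerXn.
have -> : (m%:R : R) = (\sum_(i < m) 'X^i).[1].
  by rewrite horner_sum; under eq_bigr do rewrite hornerXn expr1n; rewrite sumr_const card_ord.
apply: cvg_within_filter; exact: continuous_horner.
Qed.

Lemma expr_ratio_cvg m k : (0 < k)%N ->
  (1 - q ^+ m) / (1 - q ^+ k) @[q --> (1 : R)^'] --> (m%:R / k%:R : R).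
Proof.
move=> k_gt0.
have geom_ratio : \forall q \near (1 : R)^',
    (\sum_(i < m) q ^+ i) / (\sum_(i < k) q ^+ i) = (1 - q ^+ m) / (1 - q ^+ k).
  near=> q; have q_neq1 : q - 1 != 0 by rewrite subr_eq0; near: q; exact: nbhs_dnbhs_neq.
  by rewrite -opprB -[1 - _]opprB invrN mulrNN !subrX1 -mulf_div divff ?mul1r.
apply: cvg_trans (near_eq_cvg geom_ratio) _.
apply: cvgM; first exact: geom_sum_cvg.
by apply: cvgV; [rewrite pnatr_eq0 -lt0n | exact: geom_sum_cvg].
Unshelve. all: by end_near.
Qed.

Lemma alpha_diag_cvg n l : alpha n l q q @[q --> (1 : R)^'] -->
  (\prod_(c <- cells l | inR n l c) ((hook l c)%:R / (hook n c)%:R) *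
   \prod_(c <- cells l | inC n l c) ((hook l c)%:R / (hook n c)%:R) : R).
Proof.
under eq_cvg do rewrite alpha_diag.
have hook_qratio_cvg c :
    hook_qratio n l q c @[q --> (1 : R)^'] --> ((hook l c)%:R / (hook n c)%:R : R).
  by apply: expr_ratio_cvg; rewrite /hook addn1.
by apply: cvgM; apply: (cvg_big mul_continuous) => // c _; exact: hook_qratio_cvg.
Qed.

End limits.

Theorem lemma4p8 (R : realType) (l n : seq nat) :
  is_partition l -> is_partition n ->
  {subset cells l <= cells n} -> sumn n = (sumn l).+1 ->
  (alpha n l q q @[q --> (1 : R)^'] --> ((hook_prod l)%:R / (hook_prod n)%:R : R)) /\
  (alphabar n l q q @[q --> (1 : R)^'] --> ((hook_prod l)%:R / (hook_prod n)%:R : R)).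
Proof.
move=> l_part n_part sub_ln sum_n.
have [b0 nth_n] := leq_nth_sumnS (fun y => cells_subset_leq_nth y sub_ln) sum_n.
have prow_n y : (0 < y)%N -> prow n y = (prow l y + (y == b0.+1))%N.
  by case: y => // y _; rewrite /prow /= nth_n.
have := @alpha_diag_cvg R n l.
rewrite (hook_ratio_prod l_part n_part (ltn0Sn b0) prow_n) => alpha_cvg.
by split=> //; under eq_cvg do rewrite alphabar_diag.
Qed.
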